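(* Let $\tau:\mathbb N\to\mathbb N$ be defined by $\tau(n)=\lfloor\varphi n+1\rfloor$ if $n\in R_{2,0}$, $\tau(n)=\lfloor\varphi n-1\rfloor$ if $n\in R_{1,0}$, and $\tau(n)=\lfloor(\varphi-1)n+1\rfloor$ if $n\in R_{1,1}$. If $n\in R_{1,0}$, then $\tau(n)\in R_{1,0}$ and $\tau^3(n)=\tau^2(n)+\tau(n)-2$.
   Context: $\mathbb N=\{1,2,\dots\}$, $\varphi=\frac{1+\sqrt5}{2}$, $F$ the Fibonacci numbers ($F(0)=0,F(1)=F(2)=1$). For $i\in\mathbb Z^{\ge0},j\in\mathbb Z$, $R_{i,j}$ is the range of $n\mapsto F(i+1)\lfloor n\varphi\rfloor+F(i)n-j$, $n\in\mathbb N$; the sets $R_{2,0},R_{1,0},R_{1,1}$ partition $\mathbb N$. $\tau^k$ denotes the $k$-fold composition. *)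

From Stdlib Require Import Reals ZArith Lia Lra.
Open Scope R_scope.

Fixpoint fib (n : nat) : nat :=
  match n with
  | O => O
  | S m => match m with
           | O => 1%nat
           | S k => (fib m + fib k)%nat
           end
  end.

Definition phi : R := (1 + sqrt 5) / 2.

Definition floorR (r : R) : Z := Int_part r.

Definition Rij (i : nat) (j : Z) (m : Z) : Prop :=
  exists n : nat, (1 <= n)%nat /\
    m = (Z.of_nat (fib (i + 1)) * floorR (INR n * phi)
         + Z.of_nat (fib i) * Z.of_nat n - j)%Z.

(** Every element of [R_{1,0}] is [b k + k] with [b k = floor (k phi)], [k >= 1].
    As [k phi] is never an integer, [phi^2 = phi + 1] gives [b (b k) = b k + k - 1]
    and [tau (b k + k) = b (b k) + b k]: on [R_{1,0}], [tau] is the index shift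
    [k |-> b k]. Along the orbit [k_{i+1} = b k_i] we get [k_{i+2} = k_{i+1} + k_i - 1],
    and [tau^i n = k_{i+1} + k_i] turns this into [tau^3 n = tau^2 n + tau n - 2]. *)
From Stdlib Require Import Reals ZArith Lia Lra.
Open Scope R_scope.

Lemma Z_divide_5_sqr (x : Z) : (5 | x * x)%Z -> (5 | x)%Z.
Proof.
  intros Hxx.
  apply Z.mod_divide in Hxx; [|lia]. apply Z.mod_divide; [lia|].
  rewrite Z.mul_mod in Hxx by lia.
  pose proof (Z.mod_pos_bound x 5 ltac:(lia)).
  assert (Hr : (x mod 5 = 0 \/ x mod 5 = 1 \/ x mod 5 = 2 \/ x mod 5 = 3 \/ x mod 5 = 4)%Z)
    by lia.
  destruct Hr as [Hr|[Hr|[Hr|[Hr|Hr]]]]; rewrite Hr in Hxx |- *; easy.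
Qed.

Lemma Z_sqr_neq_5_mul_sqr (x y : Z) : y <> 0%Z -> (x * x <> 5 * (y * y))%Z.
Proof.
  remember (Z.abs_nat y) as m eqn:Hm.
  revert x y Hm. induction m as [m IH] using lt_wf_ind.
  intros x y Hm Hy0 Hxy.
  (* [x = 5 q] and then [(y, q)] is a smaller solution. *)
  assert (H5x : (5 | x * x)%Z) by (exists (y * y)%Z; lia).
  destruct (Z_divide_5_sqr x H5x) as [q ->].
  assert (Hyq : (y * y = 5 * (q * q))%Z) by lia.
  assert (Hq0 : q <> 0%Z) by (intros ->; nia).
  assert (Hlt : (Z.abs_nat q < m)%nat).
  { assert (Z.abs q < Z.abs y)%Z by nia. lia. }
  exact (IH _ Hlt y q eq_refl Hq0 Hyq).
Qed.

Lemma phi_sqr : phi * phi = phi + 1.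
Proof. unfold phi. pose proof (sqrt_sqrt 5 ltac:(lra)). nra. Qed.

Lemma phi_gt_1_lt_2 : 1 < phi < 2.
Proof.
  unfold phi. pose proof (sqrt_sqrt 5 ltac:(lra)). pose proof (sqrt_pos 5).
  split; nra.
Qed.

Lemma INR_mul_phi_neq_IZR (k : nat) (z : Z) : (1 <= k)%nat -> INR k * phi <> IZR z.
Proof.
  intros Hk Hkz.
  (* [k sqrt 5 = 2 z - k], squared, is an integer solution of [x^2 = 5 y^2]. *)
  assert (Hs : INR k * sqrt 5 = 2 * IZR z - INR k) by (unfold phi in Hkz; lra).
  pose proof (sqrt_sqrt 5 ltac:(lra)) as H5.
  apply (Z_sqr_neq_5_mul_sqr (2 * z - Z.of_nat k) (Z.of_nat k)); [lia|].
  apply eq_IZR. rewrite mult_IZR, !minus_IZR, !mult_IZR, <- INR_IZR_INZ, <- Hs.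
  replace (INR k * sqrt 5 * (INR k * sqrt 5)) with (INR k * INR k * (sqrt 5 * sqrt 5))
    by ring.
  rewrite H5. ring.
Qed.

Lemma floorR_eq (z : Z) (r : R) : IZR z <= r < IZR z + 1 -> floorR r = z.
Proof. intros Hr. symmetry. apply Int_part_spec. lra. Qed.

Lemma floorR_ge_0 (r : R) : 0 <= r -> (0 <= floorR r)%Z.
Proof.
  intros Hr. unfold floorR. destruct (base_Int_part r) as [_ Hlt].
  assert (Hgt : -1 < IZR (Int_part r)) by lra.
  apply lt_IZR in Hgt. lia.
Qed.

Definition beatty (k : nat) : nat := Z.to_nat (floorR (INR k * phi)).

Lemma Z_of_nat_beatty (k : nat) : Z.of_nat (beatty k) = floorR (INR k * phi).
Proof.
  apply Z2Nat.id, floorR_ge_0.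
  pose proof (pos_INR k). pose proof phi_gt_1_lt_2. nra.
Qed.

Lemma beatty_frac_bounds (k : nat) : (1 <= k)%nat ->
  0 < INR k * phi - INR (beatty k) < 1.
Proof.
  intros Hk. rewrite (INR_IZR_INZ (beatty k)), Z_of_nat_beatty. unfold floorR.
  destruct (base_Int_part (INR k * phi)) as [Hle Hgt].
  pose proof (INR_mul_phi_neq_IZR k (Int_part (INR k * phi)) Hk).
  split; [destruct Hle|]; lra.
Qed.

Lemma beatty_ge_1 (k : nat) : (1 <= k)%nat -> (1 <= beatty k)%nat.
Proof.
  intros Hk. pose proof (beatty_frac_bounds k Hk). pose proof phi_gt_1_lt_2.
  assert (1 <= INR k) by (apply (le_INR 1); exact Hk).
  destruct (beatty k); simpl in *; [nra | lia].
Qed.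

(* Used with [b = floor (x phi)], when [x phi - b] is the fractional part of [x phi]. *)
Lemma mul_phi_conj (b x : R) : b * phi = b + x - (phi - 1) * (x * phi - b).
Proof.
  replace (b + x - (phi - 1) * (x * phi - b)) with (b * phi - x * (phi * phi - phi - 1))
    by ring.
  rewrite phi_sqr. ring.
Qed.

Lemma beatty_beatty (k : nat) : (1 <= k)%nat -> beatty (beatty k) = (beatty k + k - 1)%nat.
Proof.
  intros Hk. pose proof (beatty_frac_bounds k Hk). pose proof phi_gt_1_lt_2.
  apply Nat2Z.inj. rewrite Z_of_nat_beatty. apply floorR_eq.
  rewrite <- INR_IZR_INZ, minus_INR, plus_INR by lia.
  rewrite (mul_phi_conj (INR (beatty k)) (INR k)). simpl. nra.
Qed.

Lemma floorR_phi_mul_beatty_add_sub_1 (k : nat) : (1 <= k)%nat ->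
  floorR (phi * INR (beatty k + k) - 1) = Z.of_nat (2 * beatty k + k - 1).
Proof.
  intros Hk. pose proof (beatty_frac_bounds k Hk). pose proof phi_gt_1_lt_2.
  apply floorR_eq.
  rewrite <- INR_IZR_INZ, minus_INR, !plus_INR, mult_INR by lia.
  rewrite Rmult_plus_distr_l, (Rmult_comm phi (INR (beatty k))).
  rewrite (mul_phi_conj (INR (beatty k)) (INR k)). simpl. nra.
Qed.

Lemma Rij_1_0_iff (m : nat) :
  Rij 1 0 (Z.of_nat m) <-> exists k, (1 <= k)%nat /\ m = (beatty k + k)%nat.
Proof.
  unfold Rij. simpl (fib _). setoid_rewrite <- Z_of_nat_beatty.
  split; intros [k [Hk Hm]]; exists k; split; lia.
Qed.

Section TauOnR10.

Variable tau : nat -> nat.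
Hypothesis tau_R10 : forall n : nat, (1 <= n)%nat -> Rij 1 0%Z (Z.of_nat n) ->
  Z.of_nat (tau n) = floorR (phi * INR n - 1).

Lemma tau_beatty_add (k : nat) : (1 <= k)%nat ->
  tau (beatty k + k) = (beatty (beatty k) + beatty k)%nat.
Proof.
  intros Hk.
  assert (HR : Rij 1 0 (Z.of_nat (beatty k + k))) by (apply Rij_1_0_iff; eauto).
  apply Nat2Z.inj.
  rewrite tau_R10, floorR_phi_mul_beatty_add_sub_1, beatty_beatty by (easy || lia).
  lia.
Qed.

End TauOnR10.

Theorem lemma4p6 (tau : nat -> nat)
  (H20 : forall n : nat, (1 <= n)%nat -> Rij 2 0%Z (Z.of_nat n) ->
           Z.of_nat (tau n) = floorR (phi * INR n + 1))
  (H10 : forall n : nat, (1 <= n)%nat -> Rij 1 0%Z (Z.of_nat n) ->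
           Z.of_nat (tau n) = floorR (phi * INR n - 1))
  (H11 : forall n : nat, (1 <= n)%nat -> Rij 1 1%Z (Z.of_nat n) ->
           Z.of_nat (tau n) = floorR ((phi - 1) * INR n + 1))
  (n : nat) (hn : (1 <= n)%nat) (hR : Rij 1 0%Z (Z.of_nat n)) :
  Rij 1 0%Z (Z.of_nat (tau n)) /\
  Z.of_nat (tau (tau (tau n))) =
    (Z.of_nat (tau (tau n)) + Z.of_nat (tau n) - 2)%Z.
Proof.
  apply Rij_1_0_iff in hR as [k [Hk ->]].
  assert (Hk1 : (1 <= beatty k)%nat) by exact (beatty_ge_1 k Hk).
  assert (Hk2 : (1 <= beatty (beatty k))%nat) by exact (beatty_ge_1 _ Hk1).
  rewrite (tau_beatty_add tau H10 k Hk), (tau_beatty_add tau H10 _ Hk1),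
    (tau_beatty_add tau H10 _ Hk2).
  split.
  - apply Rij_1_0_iff. exists (beatty k). split; [exact Hk1 | reflexivity].
  - rewrite (beatty_beatty _ Hk2), (beatty_beatty _ Hk1). lia.
Qed.
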